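(* Let $m\ge 3$ and $H=\Theta(l_1,\ldots,l_m)$ with $l_1\ge 2$ and $l_2\ge 4$, and let $G=H^2$. Then $G$ is equitably $k$-choosable for every $k\ge 2m+2$.
   Context: All graphs are finite and simple. $\Theta(l_1,\ldots,l_m)$, with $l_1\le\cdots\le l_m$, denotes the graph consisting of two vertices $u,w$ joined by $m$ internally disjoint paths of lengths $l_1,\ldots,l_m$; the $i$th path is $u, v_{i,1},\ldots,v_{i,l_i-1}, w$. For a graph $H$, $H^2$ has vertex set $V(H)$ with two vertices adjacent iff their distance in $H$ is 1 or 2. A $k$-assignment $L$ assigns to each vertex a set of exactly $k$ colors; an equitable $L$-coloring of $G$ is a proper coloring $f$ with $f(v)\in L(v)$ such that no color is used more than $\lceil |V(G)|/k\rceil$ times; $G$ is equitably $k$-choosable if it has an equitable $L$-coloring for every $k$-assignment $L$. *)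

From mathcomp Require Import all_boot.
Set Implicit Arguments. Unset Strict Implicit. Unset Printing Implicit Defensive.

(* Vertex type of Theta(l_1,...,l_m), where l = [:: l_1; ...; l_m] (0-indexed).
   inl true = u, inl false = w, inr (Tagged i j) = v_{i+1, j+1}  (j < l_i - 1). *)
Definition theta_vertex (l : seq nat) : finType :=
  (bool + {i : 'I_(size l) & 'I_(nth 0 l i).-1})%type.

(* position of vertex x on the i-th path (u at 0, v_{i,j} at j, w at l_i),
   None if x is not on that path *)
Definition theta_pos (l : seq nat) (i : 'I_(size l)) (x : theta_vertex l)
  : option nat :=
  match x with
  | inl true => Some 0
  | inl false => Some (nth 0 l i)
  | inr t => if tag t == i then Some (tagged t).+1 else None
  end.

Definition theta_adj (l : seq nat) : rel (theta_vertex l) :=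
  fun x y => [exists i : 'I_(size l),
    match theta_pos i x, theta_pos i y with
    | Some a, Some b => (a.+1 == b) || (b.+1 == a)
    | _, _ => false
    end].

Definition graph_square (T : finType) (e : rel T) : rel T :=
  fun x y => (x != y) && (e x y || [exists z, e x z && e z y]).

Definition k_assignment (T : finType) (k : nat) (L : T -> seq nat) : Prop :=
  forall v, uniq (L v) /\ size (L v) = k.

Definition ceil_div (n k : nat) : nat := (n + k.-1) %/ k.

Definition equitable_L_coloring (T : finType) (e : rel T) (k : nat)
  (L : T -> seq nat) (f : T -> nat) : Prop :=
  [/\ forall v, f v \in L v,
      forall x y, e x y -> f x != f y &
      forall c : nat, #|[pred v | f v == c]| <= ceil_div #|T| k].

Definition equitably_k_choosable (T : finType) (e : rel T) (k : nat) : Prop :=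
  forall L : T -> seq nat, k_assignment k L ->
    exists f : T -> nat, equitable_L_coloring e k L f.

From mathcomp Require Import all_boot zify.
Set Implicit Arguments. Unset Strict Implicit. Unset Printing Implicit Defensive.

(* The proof is a block-greedy argument.  Fix an ordering of the vertices by
   positions 1 .. n and cut it into blocks of k consecutive positions.  Color
   the vertices from the last position to the first, giving each vertex a color
   of its list that differs from the colors of its already colored neighbours
   and of the already colored vertices of its block.  This succeeds as soon as,
   for every vertex x, the neighbours of x beyond its block plus the vertices
   after x in its block number fewer than k; and since a color is used at most
   once per block, the coloring is equitable (section BlockGreedy).

   For G = H^2 we then exhibit such an ordering: u, the two layers around u, w,
   a first run of "body" vertices (inner vertices at distance >= 3 from both u
   and w) filling the first block, the two layers around w, and the remaining
   body vertices, each run listed backwards along the paths.  The criterion is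
   checked separately for each of the eight kinds of vertices, using that two
   inner vertices adjacent in G lie within distance 2 on one path or are both
   neighbours of u or both neighbours of w (section ThetaSquare). *)

Lemma card_le_inj (T : finType) (A : {pred T}) (f : T -> nat) (s : seq nat) :
  {in A &, injective f} -> (forall x, x \in A -> f x \in s) -> #|A| <= size s.
Proof.
move=> f_inj f_in; rewrite cardE -(size_map f).
apply: uniq_leq_size => [|_ /mapP [x Ax ->]]; last by apply: f_in; rewrite -mem_enum.
by rewrite map_inj_in_uniq ?enum_uniq // => x y; rewrite !mem_enum; exact: f_inj.
Qed.

Lemma card_orb_le (T : finType) (A B : pred T) :
  #|[pred y | A y || B y]| <= #|[pred y | A y]| + #|[pred y | B y]|.
Proof.
rewrite -cardUI; apply: leq_trans (leq_addr _ _).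
by apply: subset_leq_card; apply/subsetP => y; rewrite !inE.
Qed.

Lemma free_color (s forbidden : seq nat) :
  uniq s -> size forbidden < size s -> exists2 c, c \in s & c \notin forbidden.
Proof.
move=> s_uniq small; apply/hasP; rewrite has_predC; apply/negP => /allP s_sub.
by have := uniq_leq_size s_uniq s_sub; rewrite leqNgt small.
Qed.

Section BlockGreedy.
Variables (T : finType) (e : rel T) (k : nat) (P : T -> nat).
Hypotheses (k_gt0 : 0 < k) (e_sym : symmetric e) (e_irr : irreflexive e).
Hypotheses (P_inj : injective P) (P_gt0 : forall x, 0 < P x)
  (P_le : forall x, P x <= #|T|).

Definition block x := (P x).-1 %/ k.
Definition block_end x := k * (block x).+1.

(* Neighbours of x placed after its block, plus vertices of its block placed
   after x: the colors x must avoid when colored greedily from the end. *)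
Definition later_conflicts x :=
  #|[pred y | e x y & block_end x < P y]| + (block_end x - P x).

Hypothesis few_later_conflicts : forall x, later_conflicts x < k.

Lemma block_mono x y : P x < P y -> block x <= block y.
Proof. by move=> lt_xy; apply: leq_div2r; lia. Qed.

Lemma block_ltE x y : (block x < block y) = (block_end x < P y).
Proof. by rewrite /block_end /block leq_divRL // mulnC; have := P_gt0 y; lia. Qed.

Lemma P_le_block_end x : P x <= block_end x.
Proof.
by have := ltn_ceil (P x).-1 k_gt0; rewrite /block_end /block mulnC; have := P_gt0 x; lia.
Qed.

(* The vertices after x in its own block occupy positions P x + 1 .. block_end x. *)
Lemma card_block_after x :
  #|[pred y | (block y == block x) && (P x < P y)]| <= block_end x - P x.
Proof.
rewrite -(size_iota (P x).+1 (block_end x - P x)).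
apply: (card_le_inj (f := P)) => [y z _ _|y]; first exact: P_inj.
rewrite inE mem_iota => /andP [/eqP same lt_xy].
by have := P_le_block_end y; rewrite /block_end same -/(block_end x); lia.
Qed.

Definition conflict x y := e x y || (block x == block y).

Lemma card_later_conflict x : #|[pred y | (P x < P y) && conflict x y]| < k.
Proof.
apply: leq_ltn_trans (few_later_conflicts x).
apply: leq_trans (leq_add (leqnn _) (card_block_after x)).
rewrite -cardUI; apply: leq_trans (leq_addr _ _); apply: subset_leq_card.
apply/subsetP => y; rewrite !inE => /andP [lt_xy /orP [exy | /eqP same]].
  have [lt_b | ge_b] := ltnP (block x) (block y).
    by rewrite exy -block_ltE lt_b.
  by rewrite eq_sym eqn_leq ge_b block_mono ?lt_xy ?orbT.
by rewrite same eqxx lt_xy orbT.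
Qed.

Variable L : T -> seq nat.
Hypothesis L_assign : k_assignment k L.

Definition greedy_coloring (f : T -> nat) d :=
  (forall x, #|T| < P x + d -> f x \in L x) /\
  (forall x y, #|T| < P x + d -> #|T| < P y + d -> x != y -> conflict x y ->
     f x != f y).

(* Coloring one more vertex: the vertex at position #|T| - d sees fewer than k
   forbidden colors among the d already colored ones. *)
Lemma greedy_step f d : greedy_coloring f d ->
  exists f', greedy_coloring f' d.+1.
Proof.
move=> [f_in f_ok]; rewrite /greedy_coloring.
case: (pickP [pred x | P x + d == #|T|]) => [x0 /eqP Px0 | none]; last first.
  have old z : #|T| < P z + d.+1 -> #|T| < P z + d.
    by have := none z; rewrite /= addnS => /negbT; lia.
  by exists f; split => [x /old|x y /old x_old /old]; [exact: f_in | exact: f_ok].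
pose forbidden := [seq f y | y <- enum [pred y | (P x0 < P y) && conflict x0 y]].
have [c c_in c_free] : exists2 c, c \in L x0 & c \notin forbidden.
  have [L_uniq L_size] := L_assign x0.
  by apply: free_color; rewrite // L_size size_map -cardE card_later_conflict.
have new z : #|T| < P z + d.+1 -> z = x0 \/ (#|T| < P z + d /\ P x0 < P z).
  case: (eqVneq z x0) => [|neq]; [by left | right].
  suff : P z != P x0 by lia.
  by apply: contra neq => /eqP /P_inj ->.
have f_free y : P x0 < P y -> conflict x0 y -> c != f y.
  move=> lt_y conf; apply: contraNneq c_free => ->.
  by apply: map_f; rewrite mem_enum inE lt_y.
exists (fun z => if z == x0 then c else f z); split => [x | x y].
  case: (eqVneq x x0) => [-> _ // | nx /new [x_eq | [x_old _]]]; last exact: f_in.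
  by rewrite x_eq eqxx in nx.
case: (eqVneq x x0) => [->|nx]; case: (eqVneq y x0) => [->|ny] //.
- move=> _ /new [y_eq | [_ lt_y]] _; last exact: f_free.
  by rewrite y_eq eqxx in ny.
- move=> /new [x_eq | [_ lt_x]]; first by rewrite x_eq eqxx in nx.
  by move=> _ _; rewrite /conflict e_sym eq_sym => /(f_free _ lt_x); rewrite eq_sym.
- move=> /new [x_eq | [x_old _]]; first by rewrite x_eq eqxx in nx.
  move=> /new [y_eq | [y_old _]]; first by rewrite y_eq eqxx in ny.
  exact: f_ok.
Qed.

Lemma greedy_exists d : exists f, greedy_coloring f d.
Proof.
elim: d => [|d [f /greedy_step //]].
by exists (fun=> 0); split => [x|x y]; rewrite addn0 ltnNge P_le.
Qed.

Lemma block_lt_ceil x : block x < ceil_div #|T| k.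
Proof.
rewrite /ceil_div /block leq_divRL //.
have := leq_divM (P x).-1 k; have := P_le x; have := P_gt0 x; nia.
Qed.

(* A complete greedy coloring is equitable: a color class meets each block at most once. *)
Lemma block_greedy_coloring : exists f, equitable_L_coloring e k L f.
Proof.
have [f [f_in f_ok]] := greedy_exists #|T|.
have all_colored x : #|T| < P x + #|T| by have := P_gt0 x; lia.
exists f; split => [v|x y exy|c]; first exact: f_in.
  apply: f_ok; rewrite ?all_colored ?/conflict ?exy //.
  by apply: contraTneq exy => ->; rewrite e_irr.
rewrite -(size_iota 0 (ceil_div #|T| k)).
apply: (card_le_inj (f := block)) => [x y | x _]; last by rewrite mem_iota block_lt_ceil.
rewrite !inE => /eqP fx /eqP fy same; apply/eqP; apply: contraT => neq.
have := f_ok x y (all_colored x) (all_colored y) neq.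
by rewrite /conflict same eqxx orbT fx fy eqxx; apply.
Qed.

End BlockGreedy.

Lemma block_greedy_choosable (T : finType) (e : rel T) (k : nat) (P : T -> nat) :
  0 < k -> symmetric e -> irreflexive e ->
  injective P -> (forall x, 0 < P x) -> (forall x, P x <= #|T|) ->
  (forall x, later_conflicts e k P x < k) ->
  equitably_k_choosable e k.
Proof.
move=> k_gt0 e_sym e_irr P_inj P_gt0 P_le few L L_assign.
exact: (block_greedy_coloring k_gt0 e_sym e_irr P_inj P_gt0 P_le few L_assign).
Qed.

Section ThetaSquare.
Variables (l : seq nat) (k : nat).
Hypotheses (m_ge3 : 3 <= size l) (l_sorted : sorted leq l) (len0_ge2 : 2 <= nth 0 l 0)
  (len1_ge4 : 4 <= nth 0 l 1) (k_ge : 2 * size l + 2 <= k).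
Local Notation m := (size l).
Local Notation len i := (nth 0 l i).

Lemma len_mono i j : i <= j -> j < m -> len i <= len j.
Proof.
move=> le_ij lt_jm; apply: (sorted_leq_nth leq_trans leqnn 0 l_sorted) => //.
by rewrite inE; lia.
Qed.

Lemma len_ge2 i : i < m -> 2 <= len i.
Proof. by move=> lt_im; apply: leq_trans len0_ge2 (len_mono _ lt_im). Qed.

Lemma len_ge4 i : 0 < i -> i < m -> 4 <= len i.
Proof. by move=> i_gt0 lt_im; apply: leq_trans len1_ge4 (len_mono i_gt0 lt_im). Qed.

(* Number of paths of length at least c, and of those among paths i, i+1, ...;
   the latter ranks the long paths and gives them distinct positions. *)
Definition count_ge c := count (fun a => c <= a) l.
Definition rank c i := count (fun a => c <= a) (drop i l).

Lemma rank_le_count c i : rank c i <= count_ge c.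
Proof. by rewrite /rank /count_ge -{2}(cat_take_drop i l) count_cat; lia. Qed.

Lemma rankS c i : i < m -> rank c i = (c <= len i) + rank c i.+1.
Proof. by move=> lt_im; rewrite /rank (drop_nth 0 lt_im). Qed.

Lemma rank_gt0 c i : i < m -> c <= len i -> 0 < rank c i.
Proof. by move=> lt_im le_c; rewrite rankS // le_c. Qed.

Lemma rank_anti c i j : i <= j -> rank c j <= rank c i.
Proof.
move=> le_ij; rewrite /rank -(subnKC le_ij) addnC -drop_drop.
by rewrite -{2}(cat_take_drop (j - i) (drop i l)) count_cat; lia.
Qed.

Lemma rank_inj c i j : i < m -> j < m -> c <= len i -> c <= len j ->
  rank c i = rank c j -> i = j.
Proof.
have rank_lt i' j' : i' < j' -> j' < m -> c <= len i' -> rank c j' < rank c i'.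
  move=> lt_ij lt_jm le_c; rewrite (rankS c (ltn_trans lt_ij lt_jm)) le_c.
  by have := rank_anti c lt_ij; lia.
move=> ? ? ? ? eq_r.
by case: (ltngtP i j) => // lt; [have := rank_lt i j | have := rank_lt j i]; lia.
Qed.

Lemma count_ge_anti c d : c <= d -> count_ge d <= count_ge c.
Proof. by move=> le_cd; apply: sub_count => a /= ?; lia. Qed.

(* The body of a path of length a: its inner vertices at distance >= 3 from
   both ends, numbered consecutively along the paths by the body index. *)
Definition body_len a := a - 5.
Definition body_start i := sumn (map body_len (take i l)).
Definition body_total := sumn (map body_len l).
Definition body_index i p := body_start i + (p - 3).

Lemma body_startS i : i < m -> body_start i.+1 = body_start i + body_len (len i).
Proof.
by move=> lt_im; rewrite /body_start (take_nth 0 lt_im) -cats1 map_cat sumn_cat /= addn0.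
Qed.

Lemma body_start_mono i j : i <= j -> body_start i <= body_start j.
Proof. by move=> le_ij; rewrite /body_start -(subnKC le_ij) takeD map_cat sumn_cat; lia. Qed.

Lemma body_start_le_total i : body_start i <= body_total.
Proof.
have [le_im | lt_mi] := leqP i m; last by rewrite /body_start take_oversize //; lia.
by rewrite /body_total -(take_size l) -/(body_start m); apply: body_start_mono.
Qed.

Lemma body_start_last i : i < m -> 4 <= len i -> rank 4 i = 1 ->
  body_start i.+1 = body_total.
Proof.
have body_nil (s : seq nat) : count (fun a => 4 <= a) s = 0 -> sumn (map body_len s) = 0.
  elim: s => //= a s IH; rewrite /body_len; case: (leqP 4 a) => /= ? ?; rewrite IH; lia.
move=> lt_im le4; rewrite rankS // le4 => -[tail0].
rewrite /body_total -(cat_take_drop i.+1 l) map_cat sumn_cat -/(body_start i.+1).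
by rewrite body_nil ?addn0.
Qed.

Lemma body_index_lt i p : i < m -> 3 <= p -> p + 3 <= len i ->
  body_index i p < body_start i.+1.
Proof. by move=> lt_im ? ?; rewrite body_startS // /body_index /body_len; lia. Qed.

Lemma body_index_lt_total i p : i < m -> 3 <= p -> p + 3 <= len i ->
  body_index i p < body_total.
Proof.
by move=> ? ? ?; apply: leq_trans (body_index_lt _ _ _) (body_start_le_total _).
Qed.

Lemma body_index_inj i p i' p' : i < m -> 3 <= p -> p + 3 <= len i ->
  i' < m -> 3 <= p' -> p' + 3 <= len i' ->
  body_index i p = body_index i' p' -> i = i' /\ p = p'.
Proof.
move=> lt_im p3 pl lt_i'm p3' pl' eq_b.
have := body_index_lt lt_im p3 pl; have := body_index_lt lt_i'm p3' pl'.
rewrite /body_index in eq_b *.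
case: (ltngtP i i') => [lt_ii|lt_ii|eq_ii]; last subst i';
  try have := body_start_mono lt_ii; lia.
Qed.

(* Layer sizes around u and w: vertices at distance 2 from u, neighbours of w at
   distance >= 3 from u, and vertices at distance 2 from w and >= 3 from u. *)
Definition near_u2 := count_ge 3.
Definition near_w1 := count_ge 4.
Definition near_w2 := count_ge 5.

(* The vertex order: u; the neighbours of u; the vertices at distance 2 from u;
   w; as many body vertices as fit in the first block ('early'); the two layers
   of w; the remaining ('late') body vertices.  Both runs of body vertices are
   listed by decreasing body index. *)
Definition pos_w := m + 2 + near_u2.
Definition early := minn (k - pos_w) body_total.
Definition late := body_total - early.
Definition pos_late := pos_w + early + near_w1 + near_w2.

Definition inner_pos (i p : nat) : nat :=
  if p == 1 then 1 + (m - i)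
  else if p == 2 then 1 + m + rank 3 i
  else if p.+1 == len i then pos_w + early + rank 4 i
  else if p.+2 == len i then pos_w + early + near_w1 + rank 5 i
  else if late <= body_index i p then pos_w + (body_total - body_index i p)
  else pos_late + (late - body_index i p).

Inductive inner_pos_spec (i p : nat) : nat -> Prop :=
| PosU1 of p = 1 : inner_pos_spec i p (1 + (m - i))
| PosU2 of p = 2 & 3 <= len i & 0 < rank 3 i & rank 3 i <= near_u2 :
    inner_pos_spec i p (1 + m + rank 3 i)
| PosW1 of 3 <= p & p.+1 = len i & 0 < rank 4 i & rank 4 i <= near_w1 :
    inner_pos_spec i p (pos_w + early + rank 4 i)
| PosW2 of 3 <= p & p.+2 = len i & 0 < rank 5 i & rank 5 i <= near_w2 :
    inner_pos_spec i p (pos_w + early + near_w1 + rank 5 i)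
| PosEarly of 3 <= p & p + 3 <= len i & late <= body_index i p &
    body_index i p < body_total :
    inner_pos_spec i p (pos_w + (body_total - body_index i p))
| PosLate of 3 <= p & p + 3 <= len i & body_index i p < late :
    inner_pos_spec i p (pos_late + (late - body_index i p)).

Lemma inner_posP i p : i < m -> 0 < p < len i -> inner_pos_spec i p (inner_pos i p).
Proof.
move=> lt_im /andP [p_gt0 p_lt]; rewrite /inner_pos.
case: eqP => [p1|p_ne1]; first exact: PosU1.
case: eqP => [p2|p_ne2].
  by apply: PosU2; rewrite ?rank_le_count ?rank_gt0 //; lia.
case: eqP => [pw1|p_ne_w1].
  by apply: PosW1; rewrite ?rank_le_count ?rank_gt0 //; lia.
case: eqP => [pw2|p_ne_w2].
  by apply: PosW2; rewrite ?rank_le_count ?rank_gt0 //; lia.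
have p3 : 3 <= p by lia.
have pl : p + 3 <= len i by lia.
case: leqP => late_le; last exact: PosLate.
by apply: PosEarly => //; apply: body_index_lt_total.
Qed.

Lemma near_u2_le : near_u2 <= m. Proof. exact: count_size. Qed.
Lemma near_w1_le : near_w1 <= near_u2. Proof. exact: count_ge_anti. Qed.
Lemma near_w2_le : near_w2 <= near_w1. Proof. exact: count_ge_anti. Qed.

(* All paths but possibly the first have length >= 4. *)
Lemma near_w1_ge : m.-1 <= near_w1.
Proof.
have := rank_le_count 4 1; rewrite /rank.
have -> : count (fun a => 4 <= a) (drop 1 l) = size (drop 1 l).
  apply/eqP; rewrite -all_count; apply/(all_nthP 0) => j.
  by rewrite size_drop nth_drop => lt_j; apply: len_ge4; lia.
by rewrite size_drop /near_w1; lia.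
Qed.

Lemma pos_w_le : pos_w <= k.
Proof. by have := near_u2_le; rewrite /pos_w; lia. Qed.

Lemma layer_facts :
  [/\ pos_w = m + 2 + near_u2, pos_late = pos_w + early + near_w1 + near_w2,
      late = body_total - early, pos_w + early <= k & early <= body_total].
Proof. by have := pos_w_le; split => //; rewrite /early; lia. Qed.

Lemma pos_late_le : pos_late <= k + 2 * m.
Proof.
have [? ? ? ? ?] := layer_facts.
by have := near_w1_le; have := near_w2_le; have := near_u2_le; lia.
Qed.

Lemma inner_pos_inj i p i' p' : i < m -> 0 < p < len i -> i' < m -> 0 < p' < len i' ->
  inner_pos i p = inner_pos i' p' -> i = i' /\ p = p'.
Proof.
move=> lt_im p_in lt_i'm p'_in; have [? ? ? ? ?] := layer_facts.
case: (inner_posP lt_im p_in); case: (inner_posP lt_i'm p'_in) => *; try lia.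
all: first [ apply: body_index_inj; lia
           | (have eq_i : i = i' by apply: (rank_inj (c := 3)); lia); subst i'; lia
           | (have eq_i : i = i' by apply: (rank_inj (c := 4)); lia); subst i'; lia
           | (have eq_i : i = i' by apply: (rank_inj (c := 5)); lia); subst i'; lia ].
Qed.

Lemma inner_pos_range i p : i < m -> 0 < p < len i ->
  2 <= inner_pos i p <= pos_late + late /\ inner_pos i p != pos_w.
Proof.
move=> lt_im p_in; have [? ? ? ? ?] := layer_facts.
by case: (inner_posP lt_im p_in) => *; split; lia.
Qed.

Local Notation V := (theta_vertex l).
Local Notation inner := ({i : 'I_m & 'I_(len i).-1}).

Definition path_of (t : inner) : nat := tag t.
Definition depth (t : inner) : nat := (tagged t).+1.

Definition pos (x : V) : nat :=
  match x with
  | inl b => if b then 1 else pos_w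
  | inr t => inner_pos (path_of t) (depth t)
  end.

Lemma path_lt t : path_of t < m. Proof. exact: ltn_ord. Qed.

Lemma depthP t : 0 < depth t < len (path_of t).
Proof. by case: t => i j; rewrite /depth /path_of /=; have := ltn_ord j; lia. Qed.

Lemma inner_eq t t' : path_of t = path_of t' -> depth t = depth t' -> t = t'.
Proof.
case: t => i j; case: t' => i' j'; rewrite /path_of /depth /= => /val_inj eq_i.
by subst i' => -[/val_inj ->].
Qed.

Lemma pos_range x : 0 < pos x <= pos_late + late.
Proof.
have [? ? ? ? ?] := layer_facts.
case: x => [[]|t] /=; try lia.
by have [/andP [? ?] _] := inner_pos_range (path_lt t) (depthP t); lia.
Qed.

Lemma pos_inj : injective pos.
Proof.
have w_gt1 : 1 < pos_w by rewrite /pos_w; lia.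
have range t := inner_pos_range (path_lt t) (depthP t).
case=> [[]|t] [[]|t'] //=; try lia.
- by have [/andP [? ?] _] := range t'; lia.
- by have [_ /eqP ne] := range t'; move=> eq; case: ne.
- by have [/andP [? ?] _] := range t; lia.
- by have [_ /eqP ne] := range t; move=> eq; case: ne.
- move=> eq.
  have [eq_i eq_p] := inner_pos_inj (path_lt t) (depthP t) (path_lt t') (depthP t') eq.
  by rewrite (inner_eq eq_i eq_p).
Qed.

(* Counting inner vertices path by path: a path of length a >= 2 has a - 1 of
   them, split into the two layers around u, the two around w, and its body. *)
Lemma sum_inner_counts (s : seq nat) : all (fun a => 2 <= a) s ->
  sumn (map predn s) = size s + count (fun a => 3 <= a) s + count (fun a => 4 <= a) s
     + count (fun a => 5 <= a) s + sumn (map body_len s).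
Proof.
elim: s => //= a s IH /andP [a_ge2 s_ge2]; rewrite IH //.
by case: a a_ge2 => [|[|[|[|[|[|a]]]]]] //= _; rewrite /body_len; lia.
Qed.

(* The last position is #|V|, so the positions are exactly 1 .. #|V|. *)
Lemma card_theta : #|V| = pos_late + late.
Proof.
rewrite card_sum card_bool card_tagged.
have -> : [seq #|'I_(len i).-1| | i : 'I_m <- enum 'I_m] = map predn l.
  transitivity [seq (nth 0 l j).-1 | j <- map val (enum 'I_m)].
    by rewrite -map_comp; apply: eq_map => i /=; rewrite card_ord.
  by rewrite val_enum_ord -{3}(mkseq_nth 0 l) /mkseq -map_comp.
rewrite sum_inner_counts; last by apply/(all_nthP 0) => i; apply: len_ge2.
have [E_w E_late E_l _ early_le] := layer_facts.
by move: E_w E_late E_l early_le; rewrite /near_u2 /near_w1 /near_w2 /count_ge /body_total; lia.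
Qed.

Local Notation adj := (@theta_adj l).

Lemma theta_pos_inner i t : theta_pos i (inr t) = if tag t == i then Some (depth t) else None.
Proof. by []. Qed.

Lemma adj_sym : symmetric adj.
Proof.
move=> x y; apply: eq_existsb => i.
by case: (theta_pos i x) => [a|]; case: (theta_pos i y) => [b|] //; rewrite orbC.
Qed.

Lemma adj_inner t t' : adj (inr t) (inr t') ->
  path_of t = path_of t' /\ ((depth t).+1 = depth t' \/ (depth t').+1 = depth t).
Proof.
case/existsP => i; rewrite !theta_pos_inner.
by case: eqP => // eq_t; case: eqP => // eq_t' /orP [/eqP ?|/eqP ?];
  (split; [rewrite /path_of eq_t eq_t' | lia]).
Qed.

Lemma adj_u_inner t : adj (inl true) (inr t) -> depth t = 1.
Proof.
by case/existsP => i; rewrite theta_pos_inner /=; case: eqP => // _; case: (depth t) => [|[|n]].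
Qed.

Lemma adj_w_inner t : adj (inl false) (inr t) -> (depth t).+1 = len (path_of t).
Proof.
case/existsP => i; rewrite theta_pos_inner /=; case: eqP => // eq_t /orP [/eqP ?|/eqP ?].
  by have := depthP t; rewrite /path_of eq_t; lia.
by rewrite /path_of eq_t.
Qed.

(* u and w are adjacent neither to each other (all paths have length >= 2) nor
   to themselves. *)
Lemma adj_ends b b' : ~~ adj (inl b) (inl b').
Proof.
apply/existsP => -[[i lt_im]] /=; have := len_ge2 lt_im.
by case: b b' => -[] /=; case: (nth 0 l i) => [|[|n]] //; rewrite ?eqSS; lia.
Qed.

Local Notation G := (graph_square adj).

Lemma sq_sym : symmetric G.
Proof.
move=> x y; rewrite /graph_square eq_sym adj_sym; congr (_ && (_ || _)).
by apply: eq_existsb => z; rewrite andbC !(adj_sym z).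
Qed.

Lemma sq_irr : irreflexive G.
Proof. by move=> x; rewrite /graph_square eqxx. Qed.

Lemma sq_inner t t' : G (inr t) (inr t') ->
  [\/ path_of t = path_of t' /\ depth t <= depth t' + 2 /\ depth t' <= depth t + 2,
      depth t = 1 /\ depth t' = 1 |
      (depth t).+1 = len (path_of t) /\ (depth t').+1 = len (path_of t')].
Proof.
case/andP => _ /orP [/adj_inner [? ?]|/existsP [z /andP [adj_tz adj_zt']]].
  by apply: Or31; lia.
case: z adj_tz adj_zt' => [[]|z] adj_tz adj_zt'; rewrite adj_sym in adj_tz.
- by apply: Or32; split; [exact: adj_u_inner adj_tz | exact: adj_u_inner adj_zt'].
- by apply: Or33; split; [exact: adj_w_inner adj_tz | exact: adj_w_inner adj_zt'].
- by apply: Or31; have [? ?] := adj_inner adj_tz; have [? ?] := adj_inner adj_zt'; lia.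
Qed.

Lemma sq_u_inner t : G (inl true) (inr t) -> depth t <= 2.
Proof.
case/andP => _ /orP [/adj_u_inner -> //|/existsP [[[]|z] /andP [adj_uz adj_zt]]].
- by rewrite (negbTE (adj_ends _ _)) in adj_uz.
- by rewrite (negbTE (adj_ends _ _)) in adj_uz.
- by have := adj_u_inner adj_uz; have [_ ?] := adj_inner adj_zt; have := depthP t; lia.
Qed.

Lemma sq_w_inner t : G (inl false) (inr t) -> len (path_of t) <= depth t + 2.
Proof.
case/andP => _ /orP [/adj_w_inner ? |/existsP [[[]|z] /andP [adj_wz adj_zt]]]; first lia.
- by rewrite (negbTE (adj_ends _ _)) in adj_wz.
- by rewrite (negbTE (adj_ends _ _)) in adj_wz.
- by have := adj_w_inner adj_wz; have [eq_p ?] := adj_inner adj_zt; rewrite eq_p; lia.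
Qed.

Definition on_segment i a b (y : V) : bool :=
  if y is inr t then (path_of t == i) && (a <= depth t) && (depth t <= b) else false.
Definition next_to_w (y : V) : bool :=
  if y is inr t then (depth t).+1 == len (path_of t) else false.

Lemma card_on_segment i a b : #|[pred y | on_segment i a b y]| <= b.+1 - a.
Proof.
rewrite -(size_iota a (b.+1 - a)).
apply: (card_le_inj (f := fun y : V => if y is inr t then depth t else 0)).
  move=> [[]|t] [[]|t'] //; rewrite !inE /= => /andP [/andP [/eqP eq_i _] _].
  by move=> /andP [/andP [/eqP eq_i' _] _] eq_p; rewrite (@inner_eq t t') // eq_i eq_i'.
by move=> [[]|t] //; rewrite inE /= mem_iota => /andP [/andP [_ ?] ?]; lia.
Qed.

Lemma card_next_to_w : #|[pred y | next_to_w y]| <= m.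
Proof.
rewrite -(size_iota 0 m).
apply: (card_le_inj (f := fun y : V => if y is inr t then path_of t else 0)).
  move=> [[]|t] [[]|t'] //; rewrite !inE /= => /eqP eq_t /eqP eq_t' eq_i.
  by rewrite (@inner_eq t t') //; move: eq_t eq_t'; rewrite eq_i; lia.
by move=> [[]|t] //; rewrite inE /= mem_iota => _; have := path_lt t; lia.
Qed.

Lemma card_pos_between a b : #|[pred y | a < pos y <= b]| <= b - a.
Proof.
rewrite -(size_iota a.+1 (b - a)).
apply: (card_le_inj (f := pos)) => [x y _ _|y]; first exact: pos_inj.
by rewrite inE mem_iota => /andP [? ?]; apply/andP; split; lia.
Qed.

Local Notation ipos t := (inner_pos (path_of t) (depth t)).

Lemma pos_inner t : pos (inr t) = ipos t. Proof. by []. Qed.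

Lemma pos_near_u t : depth t <= 2 -> ipos t < pos_w.
Proof.
move=> le2; have := near_u2_le; rewrite /pos_w.
by case: (inner_posP (path_lt t) (depthP t)) => *; lia.
Qed.

Lemma pos_near_w t : 3 <= depth t -> len (path_of t) <= depth t + 2 ->
  pos_w + early < ipos t <= pos_late.
Proof.
move=> ? ?; have [? ? ? ? ?] := layer_facts.
by case: (inner_posP (path_lt t) (depthP t)) => *; apply/andP; split; lia.
Qed.

Lemma pos_le_late_or t : ipos t <= pos_late \/
  [/\ 3 <= depth t, depth t + 3 <= len (path_of t),
      body_index (path_of t) (depth t) < late &
      ipos t = pos_late + (late - body_index (path_of t) (depth t))].
Proof.
have [? ? ? ? ?] := layer_facts; have := near_u2_le.
by case: (inner_posP (path_lt t) (depthP t)) => *; [left; lia ..| right].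
Qed.

Lemma depth_ge3 t B : pos_w <= B -> B < ipos t -> 3 <= depth t.
Proof. by move=> ? ?; case: (leqP 3 (depth t)) => // ?; have := @pos_near_u t; lia. Qed.

Lemma pos_end_le b : pos (inl b) <= k.
Proof. by have := pos_w_le; case: b => /=; lia. Qed.

Lemma k_gt0 : 0 < k. Proof. lia. Qed.

Local Notation block_end := (block_end k pos).

Lemma block_end_bounds x : pos x <= block_end x < pos x + k.
Proof.
rewrite /block_end /block; have := pos_range x; have := ltn_ceil (pos x).-1 k_gt0.
have := leq_divM (pos x).-1 k; move: ((pos x).-1 %/ k) => q.
by move=> ? ? /andP [? _]; apply/andP; split; nia.
Qed.

Lemma block_end_first x : pos x <= k -> block_end x = k.
Proof.
by move=> ?; rewrite /block_end /block divn_small ?muln1 //; have := pos_range x; lia.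
Qed.

Lemma block_end_second x : k < pos x <= 2 * k -> block_end x = 2 * k.
Proof.
move=> /andP [? ?]; rewrite /block_end /block.
have q_ge1 : 1 <= (pos x).-1 %/ k by rewrite leq_divRL ?k_gt0 //; lia.
have q_lt2 : (pos x).-1 %/ k < 2 by rewrite ltn_divLR ?k_gt0 //; lia.
have -> : (pos x).-1 %/ k = 1 by lia.
by rewrite mulnC.
Qed.

Definition conflict_ok x := later_conflicts G k pos x < k.

Lemma ok_first_block x : pos x <= k ->
  #|[pred y | G x y & k < pos y]| < pos x -> conflict_ok x.
Proof. by move=> ? ?; rewrite /conflict_ok /later_conflicts block_end_first //; lia. Qed.

Lemma ok_second_block x : k < pos x <= 2 * k ->
  #|[pred y | G x y & 2 * k < pos y]| < pos x - k -> conflict_ok x.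
Proof.
move=> range ?; rewrite /conflict_ok /later_conflicts block_end_second //.
by move/andP: range; lia.
Qed.

Lemma card_late_nbrs_le x B (S : pred V) n :
  (forall y, G x y -> B < pos y -> S y) -> #|S| <= n ->
  #|[pred y | G x y & B < pos y]| <= n.
Proof.
move=> sub card_S; apply: leq_trans card_S; apply: subset_leq_card.
by apply/subsetP => y; rewrite inE => /andP [? ?]; exact: sub.
Qed.

Lemma after_first_inner x B : k <= B -> B < pos x -> exists t, x = inr t.
Proof. by case: x => [b|t] ? ?; [have := pos_end_le b; lia | exists t]. Qed.

Lemma nbr_beyond_first t y : G (inr t) y -> k < pos y ->
  exists2 t', y = inr t' & 3 <= depth t' /\
    (path_of t' = path_of t /\ depth t <= depth t' + 2 <= depth t + 4 \/
     (depth t).+1 = len (path_of t) /\ (depth t').+1 = len (path_of t')).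
Proof.
move=> G_ty after; have [t' y_t'] := after_first_inner (leqnn k) after.
rewrite y_t' pos_inner in G_ty after; have d3 := depth_ge3 pos_w_le after.
exists t' => //; split => //.
by case: (sq_inner G_ty) => [[eq_p [? ?]] | [? ?] | [? ?]]; [left | lia | right]; lia.
Qed.

Lemma late_nbr t t' : G (inr t) (inr t') -> pos_late < pos (inr t') ->
  [/\ path_of t' = path_of t, depth t <= depth t' + 2 <= depth t + 4,
      depth t' + 3 <= len (path_of t), body_index (path_of t) (depth t') < late &
      pos (inr t') = pos_late + (late - body_index (path_of t) (depth t'))].
Proof.
rewrite pos_inner => G_tt' after.
case: (pos_le_late_or t') => [|[? body_t' late_t' pos_t']]; first lia.
case: (sq_inner G_tt') => [[eq_p [? ?]] | [? ?] | [? ?]]; try lia.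
by rewrite -eq_p in body_t' late_t' pos_t' *; split => //; lia.
Qed.

Lemma nbr_beyond_second t y : G (inr t) y -> 2 * k < pos y ->
  exists2 t', y = inr t' &
    [/\ path_of t' = path_of t, depth t <= depth t' + 2,
        depth t' + 3 <= len (path_of t), body_index (path_of t) (depth t') < late &
        2 * k < pos_late + (late - body_index (path_of t) (depth t'))].
Proof.
move=> G_ty after; have [t' y_t'] := after_first_inner (leq_pmull k (isT : 0 < 2)) after.
rewrite y_t' in G_ty after; have late_le := pos_late_le.
have [eq_p d_near body_t' late_t' pos_t'] := late_nbr G_ty (ltac:(lia)).
by exists t' => //; split; rewrite -?pos_t' //; lia.
Qed.

(* u sees nothing beyond the first block. *)
Lemma ok_u : conflict_ok (inl true).
Proof.
apply: ok_first_block => /=; first lia.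
apply: (leq_ltn_trans (card_late_nbrs_le (S := pred0) (n := 0) _ _)) => //;
  last by rewrite card0.
move=> y G_uy /[dup] after /(after_first_inner (leqnn k)) [t y_t].
rewrite y_t pos_inner in G_uy after.
by have := sq_u_inner G_uy; have := @pos_near_u t; have := pos_w_le; lia.
Qed.

(* The neighbours of w beyond the first block lie in its two layers. *)
Lemma ok_w : conflict_ok (inl false).
Proof.
apply: ok_first_block; first exact: pos_end_le.
apply: (leq_ltn_trans (card_late_nbrs_le
  (S := [pred y | pos_w + early < pos y <= pos_late]) (n := pos_late - (pos_w + early)) _ _)).
- move=> y G_wy /[dup] after /(after_first_inner (leqnn k)) [t y_t].
  rewrite y_t pos_inner in G_wy after *.
  exact: pos_near_w (depth_ge3 pos_w_le after) (sq_w_inner G_wy).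
- exact: card_pos_between.
- have := near_w1_le; have := near_w2_le; have := near_u2_le.
  by rewrite /= /pos_late /pos_w; lia.
Qed.

Lemma short_path_first t : len (path_of t) <= 3 -> path_of t = 0.
Proof.
move=> short; case: (posnP (path_of t)) => // i_gt0.
by have := len_ge4 i_gt0 (path_lt t); lia.
Qed.

(* A neighbour of u sees beyond the first block at most the vertex two steps
   further on its path, or, if its path has length 2, the neighbours of w. *)
Lemma ok_depth1 t : depth t = 1 -> conflict_ok (inr t).
Proof.
move=> d1; have [E_w _ _ _ _] := layer_facts.
have pos_t : pos (inr t) = 1 + (m - path_of t) by rewrite pos_inner /inner_pos d1.
apply: ok_first_block; first by have := pos_w_le; lia.
have [long | short] := ltnP 2 (len (path_of t)).
- apply: (leq_ltn_trans (card_late_nbrs_le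
    (S := [pred y | on_segment (path_of t) 3 3 y]) (n := 1) _ _)).
  + move=> y /nbr_beyond_first /[apply] -[t' -> [d3 [[eq_p ?] | [? _]]]]; try lia.
    by rewrite /= eq_p eqxx /=; lia.
  + exact: card_on_segment.
  + by rewrite pos_t; have := path_lt t; lia.
- have i0 := short_path_first (leq_trans short (leqnSn 2)).
  apply: (leq_ltn_trans (card_late_nbrs_le (S := [pred y | next_to_w y]) (n := m) _ _)).
  + move=> y /nbr_beyond_first /[apply] -[t' -> [d3 [[eq_p ?] | [_ w_t']]]].
      by have := depthP t'; rewrite eq_p; lia.
    by rewrite /= w_t' eqxx.
  + exact: card_next_to_w.
  + by rewrite pos_t i0; lia.
Qed.

(* A vertex at distance 2 from u sees beyond the first block at most the next
   two vertices of its path, or, if it is itself next to w, the neighbours of w. *)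
Lemma ok_depth2 t : depth t = 2 -> conflict_ok (inr t).
Proof.
move=> d2; have lt_im := path_lt t; have [E_w _ _ _ _] := layer_facts.
have len3 : 3 <= len (path_of t) by have := depthP t; lia.
have pos_t : pos (inr t) = 1 + m + rank 3 (path_of t) by rewrite pos_inner /inner_pos d2.
have := rank_gt0 lt_im len3; have : rank 3 (path_of t) <= near_u2 := rank_le_count _ _.
move=> ? ?; apply: ok_first_block; first by have := pos_w_le; lia.
have [long | short] := ltnP 3 (len (path_of t)).
- apply: (leq_ltn_trans (card_late_nbrs_le
    (S := [pred y | on_segment (path_of t) 3 4 y]) (n := 2) _ _)).
  + move=> y /nbr_beyond_first /[apply] -[t' -> [d3 [[eq_p ?] | [? _]]]]; try lia.
    by rewrite /= eq_p eqxx /=; lia.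
  + exact: card_on_segment.
  + by rewrite pos_t; lia.
- apply: (leq_ltn_trans (card_late_nbrs_le (S := [pred y | next_to_w y]) (n := m) _ _)).
  + move=> y /nbr_beyond_first /[apply] -[t' -> [d3 [[eq_p ?] | [_ w_t']]]].
      by have := depthP t'; rewrite eq_p; lia.
    by rewrite /= w_t' eqxx.
  + exact: card_next_to_w.
  + by rewrite pos_t; lia.
Qed.

(* A neighbour of w: in the first block it sees beyond it at most the three last
   vertices of its path and the neighbours of w; in the second block at most the
   late body vertex two steps back, and none at the block's first position. *)
Lemma ok_w1 t : 3 <= depth t -> (depth t).+1 = len (path_of t) -> conflict_ok (inr t).
Proof.
move=> d3 dw; have lt_im := path_lt t; have [E_w E_late E_l ? ?] := layer_facts.
have pos_t : pos (inr t) = pos_w + early + rank 4 (path_of t).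
  by rewrite pos_inner; case: (inner_posP lt_im (depthP t)) => *; lia.
have := rank_gt0 (c := 4) lt_im (ltac:(lia)).
have : rank 4 (path_of t) <= near_w1 := rank_le_count _ _.
have := pos_late_le; have := near_w1_ge; have := near_w1_le; have := near_w2_le => *.
have [first_block | second_block] := leqP (pos (inr t)) k.
  apply: ok_first_block => //.
  apply: (leq_ltn_trans (card_late_nbrs_le (n := 3 + m)
    (S := [pred y | on_segment (path_of t) (depth t - 2) (depth t) y || next_to_w y]) _ _)).
  - move=> y /nbr_beyond_first /[apply] -[t' -> [d3' [[eq_p ?] | [_ w_t']]]].
      by rewrite /= eq_p eqxx /=; have := depthP t'; rewrite eq_p; lia.
    by rewrite /= w_t' eqxx orbT.
  - apply: leq_trans (card_orb_le _ _) _.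
    by apply: leq_trans (leq_add (card_on_segment _ _ _) card_next_to_w) _; lia.
  - by rewrite pos_t; lia.
apply: ok_second_block; first by apply/andP; split; lia.
have [past_first | at_first] := ltnP k.+1 (pos (inr t)).
  apply: (leq_ltn_trans (card_late_nbrs_le (n := 1)
    (S := [pred y | on_segment (path_of t) (depth t - 2) (depth t - 2) y]) _ _)).
  - move=> y /nbr_beyond_second /[apply] -[t' -> [eq_p ? ? _ _]].
    by rewrite /= eq_p eqxx /=; lia.
  - by apply: leq_trans (card_on_segment _ _ _) _; lia.
  - lia.
(* At position k + 1 the first block is full of body vertices, so path i is the
   last path with a body and the body vertex two steps back is early. *)
apply: (leq_ltn_trans (card_late_nbrs_le (S := pred0) (n := 0) _ _)); [|by rewrite card0|lia].
move=> y /nbr_beyond_second /[apply] -[t' _ [_ ? ? _ late_pos]].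
case: (leqP body_total (k - pos_w)) => [all_early | some_late]; first by move: late_pos; lia.
have last_body : body_start (path_of t).+1 = body_total.
  by apply: body_start_last => //; move: at_first; rewrite pos_t /early; lia.
have d_t' : depth t' = depth t - 2 by lia.
by move: late_pos; rewrite /body_index d_t' body_startS // /body_len in last_body *; lia.
Qed.

(* A vertex at distance 2 from w: in the first block it sees beyond it at most
   four vertices of its path; in the second block at most the two late body
   vertices just before it, and none if all body vertices are early. *)
Lemma ok_w2 t : 3 <= depth t -> (depth t).+2 = len (path_of t) -> conflict_ok (inr t).
Proof.
move=> d3 dw; have lt_im := path_lt t; have [E_w E_late E_l ? ?] := layer_facts.
have pos_t : pos (inr t) = pos_w + early + near_w1 + rank 5 (path_of t).
  by rewrite pos_inner; case: (inner_posP lt_im (depthP t)) => *; lia.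
have := rank_gt0 (c := 5) lt_im (ltac:(lia)).
have : rank 5 (path_of t) <= near_w2 := rank_le_count _ _.
have := pos_late_le; have := near_w1_ge; have := near_w1_le; have := near_w2_le => *.
have [first_block | second_block] := leqP (pos (inr t)) k.
  apply: ok_first_block => //.
  apply: (leq_ltn_trans (card_late_nbrs_le (n := 4)
    (S := [pred y | on_segment (path_of t) (depth t - 2) (depth t + 1) y]) _ _)).
  - move=> y /nbr_beyond_first /[apply] -[t' -> [d3' [[eq_p ?] | [? ?]]]]; try lia.
    by rewrite /= eq_p eqxx /=; have := depthP t'; rewrite eq_p; lia.
  - by apply: leq_trans (card_on_segment _ _ _) _; lia.
  - by rewrite pos_t; lia.
apply: ok_second_block; first by apply/andP; split; lia.
case: (leqP body_total (k - pos_w)) => [all_early | some_late].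
  apply: (leq_ltn_trans (card_late_nbrs_le (S := pred0) (n := 0) _ _)); [|by rewrite card0|lia].
  by move=> y /nbr_beyond_second /[apply] -[t' _ [_ _ _]]; rewrite E_l /early; lia.
apply: (leq_ltn_trans (card_late_nbrs_le (n := 2)
  (S := [pred y | on_segment (path_of t) (depth t - 2) (depth t - 1) y]) _ _)).
- move=> y /nbr_beyond_second /[apply] -[t' -> [eq_p ? ? _ _]].
  by rewrite /= eq_p eqxx /=; lia.
- by apply: leq_trans (card_on_segment _ _ _) _; lia.
- by rewrite pos_t /early; lia.
Qed.

(* An early body vertex sees beyond the first block at most the five vertices
   of its path around it. *)
Lemma ok_early t : 3 <= depth t -> depth t + 3 <= len (path_of t) ->
  late <= body_index (path_of t) (depth t) ->
  body_index (path_of t) (depth t) < body_total -> conflict_ok (inr t).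
Proof.
move=> d3 body late_le lt_total; have [E_w E_late E_l ? ?] := layer_facts.
have pos_t : pos (inr t) = pos_w + (body_total - body_index (path_of t) (depth t)).
  by rewrite pos_inner; case: (inner_posP (path_lt t) (depthP t)) => *; lia.
have := near_w1_ge; have := near_w1_le => *.
apply: ok_first_block; first by rewrite pos_t; lia.
apply: (leq_ltn_trans (card_late_nbrs_le (n := 5)
  (S := [pred y | on_segment (path_of t) (depth t - 2) (depth t + 2) y]) _ _)).
- move=> y /nbr_beyond_first /[apply] -[t' -> [d3' [[eq_p ?] | [? ?]]]]; try lia.
  by rewrite /= eq_p eqxx /=; lia.
- by apply: leq_trans (card_on_segment _ _ _) _; lia.
- by rewrite pos_t; lia.
Qed.

(* A late body vertex: its later neighbours are late body vertices of its path
   within distance 2, whose positions exceed its own by at most 2. *)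
Lemma ok_late t : 3 <= depth t -> depth t + 3 <= len (path_of t) ->
  body_index (path_of t) (depth t) < late -> conflict_ok (inr t).
Proof.
move=> d3 body lt_late.
have pos_t : pos (inr t) = pos_late + (late - body_index (path_of t) (depth t)).
  by rewrite pos_inner; case: (inner_posP (path_lt t) (depthP t)) => *; lia.
have /andP [end_ge end_lt] := block_end_bounds (inr t).
rewrite /conflict_ok /later_conflicts.
suff : #|[pred y | G (inr t) y & block_end (inr t) < pos y]| <=
       pos (inr t) + 2 - block_end (inr t) by lia.
apply: (card_late_nbrs_le
  (S := [pred y | block_end (inr t) < pos y <= pos (inr t) + 2])); last exact: card_pos_between.
move=> y G_ty after; apply/andP; split => //.
have k_le : k <= block_end (inr t) by rewrite /block_end leq_pmulr.
have [t' y_t'] := after_first_inner k_le after.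
rewrite y_t' in G_ty after *.
have [eq_p d_near body_t' late_t' pos_t'] := late_nbr G_ty (ltac:(lia)).
by move: after; rewrite pos_t' pos_t /body_index; lia.
Qed.

Lemma all_conflict_ok x : conflict_ok x.
Proof.
case: x => [[]|t]; [exact: ok_u | exact: ok_w |].
have /andP [d_gt0 d_lt] := depthP t.
have [d_lt2 | d_gt2 | d2] := ltngtP (depth t) 2; last exact: ok_depth2.
  by apply: ok_depth1; lia.
case: (eqVneq (depth t).+1 (len (path_of t))) => [w1 | not_w1]; first exact: ok_w1.
case: (eqVneq (depth t).+2 (len (path_of t))) => [w2 | not_w2]; first exact: ok_w2.
have body : depth t + 3 <= len (path_of t) by move: not_w1 not_w2 => /eqP ? /eqP ?; lia.
have [late_le | lt_late] := leqP late (body_index (path_of t) (depth t)); last exact: ok_late.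
by apply: ok_early => //; apply: body_index_lt_total => //; exact: path_lt.
Qed.

Theorem theta_square_choosable : equitably_k_choosable G k.
Proof.
apply: (block_greedy_choosable (P := pos)).
- exact: k_gt0.
- exact: sq_sym.
- exact: sq_irr.
- exact: pos_inj.
- by move=> x; have /andP [] := pos_range x.
- by move=> x; rewrite card_theta; have /andP [] := pos_range x.
- exact: all_conflict_ok.
Qed.

End ThetaSquare.

Theorem lemma3p3 (l : seq nat) :
  3 <= size l -> sorted leq l ->
  2 <= nth 0 l 0 -> 4 <= nth 0 l 1 ->
  forall k : nat, 2 * size l + 2 <= k ->
    equitably_k_choosable (graph_square (@theta_adj l)) k.
Proof.
by move=> m_ge3 l_sorted len0_ge2 len1_ge4 k k_ge; exact: theta_square_choosable.
Qed.
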